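(* Let $G$ be a finite group and $H$ a normal subgroup of $G$. Then the extended subgroup sum graph $\Gamma^+_{G,H}$ admits a total perfect code if and only if $|G|$ is even and $|H|=2$.
   Context: For a normal subgroup $H$ of a finite group $G$, the extended subgroup sum graph $\Gamma^+_{G,H}$ is the simple undirected graph with vertex set $G$ in which distinct vertices $x,y$ are adjacent if and only if $xy\in H$. A total perfect code in a graph is a set $C$ of vertices such that every vertex of the graph (whether in $C$ or not) has exactly one neighbour in $C$. *)

From mathcomp Require Import all_boot all_fingroup.
Set Implicit Arguments.
Unset Strict Implicit.
Unset Printing Implicit Defensive.
Local Open Scope group_scope.

Definition ext_sum_adj (gT : finGroupType) (H : {set gT}) (x y : gT) : bool :=
  (x != y) && (x * y \in H).

Definition total_perfect_code (gT : finGroupType) (G : {set gT})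
    (adj : gT -> gT -> bool) (C : {set gT}) : Prop :=
  C \subset G /\ forall v, v \in G -> #|[set c in C | adj v c]| = 1%N.

Definition has_total_perfect_code_ext_sum (gT : finGroupType) (G H : {set gT}) : Prop :=
  exists C : {set gT}, total_perfect_code G (ext_sum_adj H) C.

(** The neighbours of [v] in the extended sum graph are the elements of the
    coset [v^-1 H] other than [v], and since [H] is normal all elements of that
    coset have their square in [H] exactly when [v] does.  If [C] is a total
    perfect code, applying the condition to the vertices of [H] (whose
    neighbourhoods lie in [H]) forces [C] to contain all of [H] and [|H| = 2],
    so [|G|] is even.  Conversely, when [|H| = 2] take for [C] the elements
    whose square lies in [H] together with one element of each remaining coset:
    a vertex with square in [H] then sees exactly the other element of its
    coset [v^-1 H], and any other vertex sees exactly the chosen element. *)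
From mathcomp Require Import all_boot all_fingroup.
Set Implicit Arguments.
Unset Strict Implicit.
Unset Printing Implicit Defensive.
Local Open Scope group_scope.

Lemma card2_of_cardsD1_eq1 (T : finType) (A S : {set T}) (a0 : T) :
  S \subset A -> a0 \in A -> {in A, forall a, #|S :\ a| = 1%N} -> #|A| = 2.
Proof.
move=> sSA Aa0 cardS1.
have [s defS] := cards1P (introT eqP (cardS1 a0 Aa0)).
have /setD1P [_ Ss] : s \in S :\ a0 by rewrite defS set11.
have cardS : #|S| = 2 by rewrite (cardsD1 s) Ss cardS1 ?(subsetP sSA).
suff -> : A = S by [].
apply/eqP; rewrite eqEsubset sSA andbT; apply/subsetP=> x Ax.
by have := cardsD1 x S; rewrite cardS cardS1 //; case: (x \in S).
Qed.

Section ExtendedSumGraph.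

Variables (gT : finGroupType) (G H : {group gT}).

Lemma ext_sum_nbhdE (C : {set gT}) (v : gT) :
  [set c in C | ext_sum_adj H v c] = (C :&: v^-1 *: H) :\ v.
Proof.
by apply/setP=> c; rewrite !inE /ext_sum_adj mem_lcoset invgK eq_sym andbCA.
Qed.

Lemma mem_lcoset_sqr (v : gT) : (v \in v^-1 *: H) = (v * v \in H).
Proof. by rewrite mem_lcoset invgK. Qed.

Lemma lcoset_sub (x : gT) : H \subset G -> x \in G -> x *: H \subset G.
Proof.
move=> sHG Gx; apply/subsetP=> c; rewrite mem_lcoset => /(subsetP sHG).
by rewrite groupMl ?groupV.
Qed.

Lemma mem_repr_lcoset (x : gT) : repr (x *: H) \in x *: H.
Proof. exact: (mem_repr x) (lcoset_refl H x). Qed.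

Lemma total_perfect_code_card (C : {set gT}) :
  H \subset G -> total_perfect_code G (ext_sum_adj H) C -> #|H| = 2.
Proof.
move=> sHG [_ codeC]; apply: (card2_of_cardsD1_eq1 (subsetIr C H) (group1 H)) => v Hv.
by rewrite -(codeC v (subsetP sHG v Hv)) ext_sum_nbhdE lcoset_id ?groupV.
Qed.

Hypothesis nHG : H <| G.

Lemma sqr_lcoset (v c : gT) :
  v \in G -> c \in v^-1 *: H -> (c * c \in H) = (v * v \in H).
Proof.
move=> Gv; rewrite mem_lcoset invgK => vcH.
have Nv : v \in 'N(H) := subsetP (normal_norm nHG) v Gv.
have cvH : c * v \in H.
  by rewrite -(memJ_norm _ Nv) /conjg !mulgA mulVg mul1g in vcH.
have -> : c * c = (c * v) * (v^-1 * v^-1) * (v * c) by rewrite !mulgA mulgK mulgKV.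
by rewrite (groupMr _ vcH) (groupMl _ cvH) -invMg groupV.
Qed.

Definition sqr_code : {set gT} :=
  [set x in G | (x * x \in H) || (x == repr (x *: H))].

Lemma sqr_code_lcoset (v : gT) : v \in G ->
  sqr_code :&: v^-1 *: H =
    if v * v \in H then v^-1 *: H else [set repr (v^-1 *: H)].
Proof.
move=> Gv; set K := v^-1 *: H.
have KG := subsetP (lcoset_sub (normal_sub nHG) (groupVr Gv)).
have defK c : c \in K -> c *: H = K by move=> Kc; apply/lcoset_eqP.
case: ifPn => vvH; apply/setP=> c; rewrite !inE andbC;
  have [Kc | notKc] := boolP (c \in K) => //=.
- by rewrite KG // (sqr_lcoset Gv Kc) vvH.
- by rewrite KG // (sqr_lcoset Gv Kc) (negbTE vvH) defK.
- by case: eqP notKc => // ->; rewrite mem_repr_lcoset.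
Qed.

Lemma sqr_code_total_perfect :
  #|H| = 2 -> total_perfect_code G (ext_sum_adj H) sqr_code.
Proof.
move=> cardH; split; first by apply/subsetP=> x; rewrite inE => /andP [].
move=> v Gv; rewrite ext_sum_nbhdE sqr_code_lcoset //.
case: ifPn => vvH.
  have := cardsD1 v (v^-1 *: H).
  by rewrite mem_lcoset_sqr vvH card_lcoset cardH => -[].
rewrite (setDidPl _) ?cards1 // disjoint_sym disjoints1 inE.
apply: contraNN vvH => /eqP vK; rewrite -mem_lcoset_sqr {1}vK.
exact: mem_repr_lcoset.
Qed.

End ExtendedSumGraph.

Theorem theorem6p3 (gT : finGroupType) (G H : {group gT}) :
  (H <| G)%g ->
  (has_total_perfect_code_ext_sum G H <-> (~~ odd #|G| /\ #|H| = 2%N)).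
Proof.
move=> nHG; have sHG := normal_sub nHG; split.
- case=> C codeC; have cardH := total_perfect_code_card sHG codeC.
  by rewrite -dvdn2 -cardH cardSg.
- by case=> _ cardH; exists (sqr_code G H); apply: sqr_code_total_perfect.
Qed.
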